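(* Let $X_1,\dots,X_n$ be completely regular continua, let $f_i:X_i\to X_i$ be continuous for $1\le i\le n$, and let $f:X_1\times\dots\times X_n\to X_1\times\dots\times X_n$ be defined by $f(x_1,\dots,x_n)=(f_1(x_1),\dots,f_n(x_n))$. Then every totally periodic $\omega$-limit set of $f$ is finite.
   Context: A continuum is a compact connected metric space; it is completely regular if every subcontinuum with more than one point has non-empty interior. For a continuous map $g$ of a compact metric space $Y$ and $y\in Y$, $\omega_g(y)=\{z:\ \exists\, n_i\to+\infty,\ g^{n_i}(y)\to z\}$; it is totally periodic if each of its points $z$ satisfies $g^m(z)=z$ for some $m\ge1$. *)

From HB Require Import structures.
From mathcomp Require Import all_boot all_order all_algebra.
From mathcomp Require Import all_classical all_reals all_analysis.
Set Implicit Arguments. Unset Strict Implicit. Unset Printing Implicit Defensive.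
Import Order.TTheory GRing.Theory Num.Theory.
Local Open Scope classical_set_scope.

(* A continuum: a compact connected metric space (metric = Hausdorff pseudometric). *)
Definition continuum {R : realType} (X : pseudoMetricType R) : Prop :=
  hausdorff_space X /\ compact [set: X] /\ connected [set: X].

Definition subcontinuum {T : topologicalType} (A : set T) : Prop :=
  A !=set0 /\ compact A /\ connected A.

Definition completely_regular_continuum {R : realType} (X : pseudoMetricType R)
  : Prop :=
  continuum X /\
  forall A : set X, subcontinuum A ->
    (exists x y, A x /\ A y /\ x <> y) -> (A^°) !=set0.

Definition omega_limit {T : topologicalType} (g : T -> T) (y : T) : set T :=
  [set z | exists u : nat -> nat,
      u @ \oo --> \oo /\ (fun k => iter (u k) g y) @ \oo --> z].

Definition totally_periodic {T : Type} (g : T -> T) (A : set T) : Prop :=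
  forall z, A z -> exists m : nat, (0 < m)%N /\ iter m g z = z.

Definition prod_map {n : nat} {X : 'I_n -> topologicalType}
  (f : forall i, X i -> X i) : prod_topology X -> prod_topology X :=
  fun x i => f i (x i).

From HB Require Import structures.
From mathcomp Require Import all_boot all_order all_algebra.
From mathcomp Require Import all_classical all_reals all_analysis.
From mathcomp Require Import lra.
Import Order.TTheory GRing.Theory Num.Theory Num.Def.
Local Open Scope classical_set_scope.
Local Open Scope ring_scope.

(* Each omega-limit set of the product map projects into the omega-limit sets
   of the factor maps, which inherit total periodicity by compactness of the
   product; so it suffices to show that a totally periodic omega-limit set
   Om = omega_g(y) in a completely regular continuum is finite.
   If the orbit of y ever enters Om, it is eventually periodic and Om is
   finite.  By Baire's theorem, some relatively open piece of Om around a point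
   p consists of fixed points of g^M, and p is a cluster point of a residue
   subsequence s_j = g^(jM+t)(y).  Consider the segments of (s_j) that start
   near p and stay near p: since g^M is the identity on Om near p, their steps
   become small, and their upper limit is a subcontinuum of Om through p.  If
   it is nondegenerate it has interior by complete regularity, so the orbit
   enters Om; if it is {p}, then s_j -> p and Om is the g-orbit of p. *)

Lemma frequently_not (P : nat -> Prop) : ~ (\forall j \near \oo, P j) ->
  forall N, exists2 j, (N <= j)%N & ~ P j.
Proof.
move=> nP N; apply: contrapT => H; apply: nP; exists N => // j Nj.
by apply: contrapT => nPj; apply: H; exists j.
Qed.

(** * Cluster points of sequences *)

Section ClusterPoints.
Context {R : realType} {T : pseudoMetricType R}.

Definition cluster_points (s : nat -> T) : set T :=
  [set z | forall e, 0 < e -> forall N, exists2 k, (N <= k)%N & ball z e (s k)].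

Lemma balls_eq {a b : T} : hausdorff_space T ->
  (forall e, 0 < e -> ball a e b) -> a = b.
Proof.
by move=> hT ab; apply: (close_eq hT); rewrite ball_close => e; apply: ab.
Qed.

Lemma neq_ball_gap {a b : T} : hausdorff_space T -> a <> b ->
  exists2 e, 0 < e & ~ ball a (e + e) b.
Proof.
move=> hT ab; apply: contrapT => near_ab; apply/ab/balls_eq => // e e0.
apply: contrapT => nb; apply: near_ab; exists (e / 2); first by rewrite divr_gt0.
by rewrite -splitr.
Qed.

Lemma compact_cluster_frequent (s : nat -> T) (P : nat -> Prop) :
  compact [set: T] -> (forall N, exists2 k, (N <= k)%N & P k) ->
  exists z, forall e, 0 < e -> forall N,
    exists k, [/\ (N <= k)%N, P k & ball z e (s k)].
Proof.
move=> cT Pinf.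
pose B N := [set x | exists k, [/\ (N <= k)%N, P k & x = s k]].
have FF : Filter (filter_from [set: nat] B).
  apply: filter_from_filter; first by exists 0%N.
  move=> i j _ _; exists (maxn i j) => // x [k [ik Pk ->]].
  by split; exists k; split => //; apply: leq_trans ik; rewrite ?leq_maxl ?leq_maxr.
have PF : ProperFilter (filter_from [set: nat] B).
  apply: filter_from_proper => N _.
  by have [k Nk Pk] := Pinf N; exists (s k), k.
have [z [_ cz]] := cT _ PF filterT.
exists z => e e0 N.
have [x [[k [Nk Pk ->]] bx]] := cz (B N) (ball z e)
  (ex_intro2 _ _ N I (fun _ h => h)) (nbhsx_ballx z _ e0).
by exists k.
Qed.

Lemma compact_cluster_points (s : nat -> T) :
  compact [set: T] -> exists z, cluster_points s z.
Proof.
move=> cT; have [z cz] := compact_cluster_frequent s (fun _ => True) cT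
  (fun N => ex_intro2 _ _ N (leqnn N) I).
by exists z => e e0 N; have [k [Nk _ bk]] := cz e e0 N; exists k.
Qed.

Lemma closed_ballP {A : set T} : closed A <->
  forall z, (forall e, 0 < e -> exists2 w, A w & ball z e w) -> A z.
Proof.
split=> [cA z near_A|near_closed].
  rewrite ((closure_id A).1 cA) => B /nbhs_ex [d hd].
  by have [w Aw bw] := near_A d%:num (gt0 d); exists w; split => //; exact: hd.
rewrite closure_id; apply/seteqP; split => [|z cz]; first exact: subset_closure.
by apply: near_closed => e e0; have [w [Aw bw]] := cz _ (nbhsx_ballx z _ e0); exists w.
Qed.

Lemma closed_cluster_points (s : nat -> T) : closed (cluster_points s).
Proof.
apply/closed_ballP => z near_s e e0 N; have e20 : 0 < e / 2 by rewrite divr_gt0.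
have [w sw bw] := near_s _ e20; have [k Nk bk] := sw _ e20 N.
by exists k => //; rewrite (splitr e); apply: ball_triangle bw bk.
Qed.

Lemma cluster_points_subseq {s : nat -> T} {p : T} : cluster_points s p ->
  forall N, exists u : nat -> nat, [/\ forall j, (N + j <= u j)%N,
    forall j, (u j < u j.+1)%N & s \o u @ \oo --> p].
Proof.
move=> sp N.
have pick (jl : nat * nat) : exists k, (jl.2 <= k)%N /\ ball p jl.1.+1%:R^-1 (s k).
  by have [k lk bk] := sp jl.1.+1%:R^-1 ltac:(by rewrite invr_gt0) jl.2; exists k.
have [c hc] := choice pick.
pose u := fix u j := if j is j'.+1 then c (j, (u j').+1) else c (0%N, N).
have uS j : (u j < u j.+1)%N by have [] := hc (j.+1, (u j).+1).
have near_p j : ball p j.+1%:R^-1 (s (u j)).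
  by case: j => [|j]; [have [] := hc (0%N, N)|have [] := hc (j.+1, (u j).+1)].
exists u; split => //.
  elim=> [|j IH]; first by rewrite addn0; have [] := hc (0%N, N).
  by rewrite addnS; exact: leq_ltn_trans IH (uS j).
apply/cvg_ballP => e e0; have [J _ HJ] := near_infty_natSinv_lt (PosNum e0).
by exists J => // j Jj; apply: le_ball (near_p j); exact/ltW/HJ.
Qed.

Lemma cluster_points_comp (s : nat -> T) (u : nat -> nat) :
  (forall j, (j <= u j)%N) -> cluster_points (s \o u) `<=` cluster_points s.
Proof.
move=> ju z cz e e0 N; have [j Nj bj] := cz e e0 N.
by exists (u j) => //; exact: leq_trans Nj (ju j).
Qed.

Lemma omega_limitE (g : T -> T) y :
  omega_limit g y = cluster_points (fun k => iter k g y).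
Proof.
apply/seteqP; split => z.
  move=> [u [hu hs]] e e0 N.
  have Nu : \forall k \near \oo, (N <= u k)%N := hu _ (nbhs_infty_ge N).
  have [k [Nk bk]] := filter_ex (filterI Nu ((cvg_ballP _ _).1 hs e e0)).
  by exists (u k).
move=> /cluster_points_subseq/(_ 0%N) [u [ju _ hs]]; exists u; split => //.
by move=> A [N _ NA]; exists N => // j /= Nj; apply/NA/(leq_trans Nj)/ju.
Qed.

Lemma cluster_points_cvg {s : nat -> T} {c : T} : hausdorff_space T ->
  s @ \oo --> c -> cluster_points s `<=` [set c].
Proof.
move=> hT sc z cz; apply/esym/balls_eq => // e e0.
have e20 : 0 < e / 2 by rewrite divr_gt0.
have [N _ HN] := (cvg_ballP _ _).1 sc _ e20.
have [k Nk bk] := cz _ e20 N.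
by rewrite (splitr e); apply: ball_triangle (HN k Nk) (ball_sym bk).
Qed.

Lemma cluster_points_shift (s : nat -> T) K :
  cluster_points s `<=` cluster_points (fun k => s (k + K)%N).
Proof.
move=> z cz e e0 N; have [k Nk bk] := cz e e0 (N + K)%N.
by exists (k - K)%N; rewrite ?leq_subRL ?subnK // ?(leq_trans _ Nk) ?leq_addl // addnC.
Qed.

Lemma cluster_points_residue {s : nat -> T} {M : nat} {z : T} : (0 < M)%N ->
  cluster_points s z ->
  exists2 t, (t < M)%N & cluster_points (fun j => s (j * M + t)%N) z.
Proof.
move=> M0 cz; apply: contrapT => no_t.
have far (t : 'I_M) : \forall N \near \oo,
    forall j, (N <= j)%N -> ~ ball z N.+1%:R^-1 (s (j * M + t)%N).
  have [e e0 [N0 HN0]] : exists2 e, 0 < e & exists N0, forall j, (N0 <= j)%N ->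
      ~ ball z e (s (j * M + t)%N).
    apply: contrapT => H; apply: no_t; exists t => // e e0 N0; apply: contrapT => nb.
    by apply: H; exists e => //; exists N0 => j N0j bj; apply: nb; exists j.
  near=> N => j Nj bj; apply: (HN0 j); last apply: le_ball bj.
    by apply: leq_trans Nj; near: N; exact: nbhs_infty_ge.
  by apply/ltW; near: N; exact: near_infty_natSinv_lt (PosNum e0).
have [N HN] := filter_ex (filter_forall _ far).
have [k Nk bk] := cz N.+1%:R^-1 ltac:(by rewrite invr_gt0) (N * M)%N.
apply: (HN (Ordinal (ltn_pmod k M0)) (k %/ M)%N); first by rewrite leq_divRL.
by rewrite /= -divn_eq.
Unshelve. all: by end_near.
Qed.

Lemma cluster_points_residue_limits (s : nat -> T) (c : nat -> T) M K :
  hausdorff_space T -> (0 < M)%N ->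
  (forall i, (i < M)%N -> (fun j => s (j * M + i + K)%N) @ \oo --> c i) ->
  cluster_points s `<=` c @` `I_M.
Proof.
move=> hT M0 sc z /(cluster_points_shift s K) /(cluster_points_residue M0) [i iM ci].
by exists i => //; symmetry; exact: (cluster_points_cvg hT (sc i iM) _ ci).
Qed.

End ClusterPoints.

Lemma cluster_points_continuous {R : realType} {T U : pseudoMetricType R}
  (h : T -> U) (s : nat -> T) z :
  {for z, continuous h} -> cluster_points s z -> cluster_points (h \o s) (h z).
Proof.
move=> hc cz e e0 N; have [d hd] := nbhs_ex (hc _ (nbhsx_ballx (h z) _ e0)).
by have [k Nk bk] := cz _ (gt0 d) N; exists k => //; exact: hd.
Qed.

(** * Gaps and Baire's theorem in compact metric spaces *)

Section CompactMetric.
Context {R : realType} {T : pseudoMetricType R}.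
Hypothesis cT : compact [set: T].

Lemma closed_ball_gap {A : set T} {w : T} : closed A -> ~ A w ->
  exists2 s, 0 < s & forall v, ball w s v -> ~ A v.
Proof.
move=> cA nAw; apply: contrapT => no_gap; apply/nAw/(closed_ballP.1 cA) => e e0.
apply: contrapT => nb; apply: no_gap; exists e => // v bv Av.
by apply: nb; exists v.
Qed.

Lemma closed_fixed_points (h : T -> T) : hausdorff_space T -> continuous h ->
  closed [set x | h x = x].
Proof.
move=> hT hc; apply/closed_ballP => z near_fix; apply: contrapT => hz.
have [e e0 ne] := neq_ball_gap hT (nesym hz).
have [d hd] := nbhs_ex (hc z _ (nbhsx_ballx (h z) _ e0)).
have [w hw bw] := near_fix (minr d%:num e) ltac:(by rewrite lt_min e0 andbT).
apply: ne; apply: ball_triangle (le_ball _ bw) _; first by rewrite ge_min lexx orbT.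
by rewrite -[w]hw; apply/ball_sym/hd; apply: le_ball bw; rewrite ge_min lexx.
Qed.

Lemma closed_disjoint_gap {A B : set T} : closed A -> closed B ->
  (forall z, A z -> B z -> False) ->
  exists2 d, 0 < d & forall x y, A x -> B y -> ~ ball x d y.
Proof.
move=> cA cB AB; apply: contrapT => no_gap.
have close_pair (t : nat) : exists xy : T * T,
    [/\ A xy.1, B xy.2 & ball xy.1 t.+1%:R^-1 xy.2].
  apply: contrapT => nt; apply: no_gap; exists t.+1%:R^-1; first by rewrite invr_gt0.
  by move=> x y Ax By bxy; apply: nt; exists (x, y).
have [xy hxy] := choice close_pair.
have [z cz] := compact_cluster_points (fun t => (xy t).1) cT.
apply: (AB z).
  apply: (closed_ballP.1 cA) => e e0; have [t _ bt] := cz e e0 0%N.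
  by exists (xy t).1 => //; have [] := hxy t.
apply: (closed_ballP.1 cB) => e e0; have e20 : 0 < e / 2 by rewrite divr_gt0.
have [N _ HN] := near_infty_natSinv_lt (PosNum e20).
have [t Nt bt] := cz _ e20 N.
have [_ Bt bxy] := hxy t; exists (xy t).2 => //.
rewrite (splitr e); apply: ball_triangle bt (le_ball _ bxy).
exact/ltW/HN.
Qed.

Lemma baire_step {Om A : set T} {p : T} {r : R} : closed A -> 0 < r ->
  ~ (Om `&` ball p (r / 2) `<=` A) ->
  exists q : T * R, [/\ Om q.1, 0 < q.2, q.2 <= r / 2, ball p (r / 2) q.1
    & forall v, ball q.1 (q.2 + q.2) v -> ~ A v].
Proof.
move=> cA r0 notA.
have [w [Ow bw] nAw] : exists2 w, (Om `&` ball p (r / 2)) w & ~ A w.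
  apply: contrapT => H; apply: notA => w Iw.
  by apply: contrapT => nAw; apply: H; exists w.
have [s s0 hs] := closed_ball_gap cA nAw.
have r20 : 0 < r / 2 by rewrite divr_gt0.
have s20 : 0 < s / 2 by rewrite divr_gt0.
exists (w, minr (r / 2) (s / 2)); split => //=; first by rewrite lt_min r20 s20.
  by rewrite ge_min lexx.
move=> v bv; apply: hs; apply: le_ball bv.
by rewrite [leRHS]splitr; apply: lerD; rewrite ge_min lexx orbT.
Qed.

Lemma compact_baire (Om : set T) (E : nat -> set T) : closed Om ->
  (forall m, closed (E m)) -> Om `<=` \bigcup_m E m -> Om !=set0 ->
  exists m p r, [/\ Om p, 0 < r & Om `&` ball p r `<=` E m].
Proof.
move=> cOm cE cov [p0 Op0]; apply: contrapT => no_ball.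
have step (mq : nat * (T * R)) : exists q : T * R, Om mq.2.1 /\ 0 < mq.2.2 ->
    [/\ Om q.1, 0 < q.2, q.2 <= mq.2.2 / 2, ball mq.2.1 (mq.2.2 / 2) q.1
      & forall v, ball q.1 (q.2 + q.2) v -> ~ E mq.1 v].
  case: mq => m [p r] /=; have [[Op r0]|] := pselect (Om p /\ 0 < r); last first.
    by move=> nn; exists (p, r) => /nn.
  have [|q hq] := baire_step (Om := Om) (p := p) (cE m) r0; last by exists q.
  by move=> sub; apply: no_ball; exists m, p, (r / 2); rewrite divr_gt0.
have [next hnext] := choice step.
pose q := fix q j := if j is j'.+1 then next (j', q j') else (p0, 1).
have good j : Om (q j).1 /\ 0 < (q j).2.
  elim: j => [|j IH] //; by have [Oj rj _ _ _] := hnext (j, q j) IH.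
have nest l j : (j < l)%N -> ball (q j).1 ((q j).2 - (q l).2) (q l).1.
  elim: l => [//|l IH]; have [_ _ le1 b1 _] := hnext (l, q l) (good l).
  rewrite ltnS leq_eqVlt => /orP[/eqP->|/IH jl].
    by apply: le_ball b1; move: le1 => /=; lra.
  by apply: le_ball (ball_triangle jl b1); move: le1 => /=; lra.
have [z cz] := compact_cluster_points (fun l => (q l).1) cT.
have Oz : Om z.
  apply: (closed_ballP.1 cOm) => e e0; have [l _ bl] := cz e e0 0%N.
  by exists (q l).1; [exact: (good l).1|].
have [m _ Em] := cov z Oz.
have [l ml bl] := cz _ (good m.+1).2 m.+2.
have [_ _ _ _ hE] := hnext (m, q m) (good m).
apply: (hE z) Em; apply: le_ball (ball_triangle (nest l m.+1 ml) (ball_sym bl)).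
by have := (good l).2; lra.
Qed.

End CompactMetric.

(** * Upper limits of segments of a sequence *)

Lemma exists_segment_index (a : nat -> nat) J k : (forall i, (i <= a i)%N) ->
  (a J <= k)%N -> exists i, (J <= i)%N /\ (a i <= k <= a i.+1)%N.
Proof.
move=> ia aJk; have exP : exists i, (a i <= k)%N by exists J.
have [i aik imax] := ex_maxnP exP (fun i aik => leq_trans (ia i) aik).
exists i; split; first exact: imax.
rewrite aik /=; apply/contraT; rewrite -ltnNge => /ltnW /imax.
by rewrite ltnn.
Qed.

Section Segments.
Context {R : realType} {T : pseudoMetricType R}.
Variables (s : nat -> T) (a b : nat -> nat).

Definition limsup_segments : set T :=
  [set z | forall e, 0 < e -> forall J, exists j k,
     [/\ (J <= j)%N, (a j <= k <= b j)%N & ball z e (s k)]].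

Lemma closed_limsup_segments : closed limsup_segments.
Proof.
apply/closed_ballP => z near_L e e0 J; have e20 : 0 < e / 2 by rewrite divr_gt0.
have [w Lw bw] := near_L _ e20; have [j [k [Jj jk bk]]] := Lw _ e20 J.
by exists j, k; split => //; rewrite (splitr e); apply: ball_triangle bw bk.
Qed.

Lemma limsup_segments_cluster : (forall j, (j <= a j)%N) ->
  limsup_segments `<=` cluster_points s.
Proof.
move=> ja z Lz e e0 N; have [j [k [Nj /andP[ak _] bk]]] := Lz e e0 N.
by exists k => //; apply: leq_trans Nj (leq_trans (ja j) ak).
Qed.

Lemma limsup_segments_start p : (forall j, (a j <= b j)%N) ->
  (fun j => s (a j)) @ \oo --> p -> limsup_segments p.
Proof.
move=> ab sp e e0 J; have [J' _ HJ'] := (cvg_ballP _ _).1 sp e e0.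
exists (maxn J J'), (a (maxn J J')); rewrite leq_maxl leqnn ab; split => //.
by apply: HJ'; rewrite /= leq_maxr.
Qed.

Lemma segments_frequently_bad (Q : nat -> nat -> Prop) : compact [set: T] ->
  ~ (\forall j \near \oo, forall k, (a j <= k <= b j)%N -> Q j k) ->
  exists z, forall e, 0 < e -> forall N, exists j k,
    [/\ (N <= j)%N, (a j <= k <= b j)%N, ~ Q j k & ball z e (s k)].
Proof.
move=> cT /frequently_not bad.
pose Bad j := ~ forall k, (a j <= k <= b j)%N -> Q j k.
have pick j : exists k, Bad j -> (a j <= k <= b j)%N /\ ~ Q j k.
  have [badj|] := pselect (Bad j); last by exists 0%N.
  have [k jk nQ] : exists2 k, (a j <= k <= b j)%N & ~ Q j k.
    apply: contrapT => H; apply: badj => k jk; apply: contrapT => nQ.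
    by apply: H; exists k.
  by exists k.
have [c hc] := choice pick.
have [z cz] := compact_cluster_frequent (s \o c) Bad cT bad.
exists z => e e0 N; have [j [Nj badj bj]] := cz e e0 N.
by have [jc nQ] := hc j badj; exists j, (c j).
Qed.

Lemma segments_near_limsup d : compact [set: T] -> 0 < d ->
  \forall j \near \oo, forall k, (a j <= k <= b j)%N ->
    exists2 l, limsup_segments l & ball l d (s k).
Proof.
move=> cT d0; pose Q (_ : nat) k := exists2 l, limsup_segments l & ball l d (s k).
apply: contrapT => /(segments_frequently_bad Q cT) [z cz].
have Lz : limsup_segments z.
  by move=> e e0 J; have [j [k [Jj jk _ bk]]] := cz e e0 J; exists j, k.
by have [j [k [_ _ nQ bk]]] := cz d d0 0%N; apply: nQ; exists z.
Qed.

(* Near [p] the map [h] fixes every cluster point, so consecutive terms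
   [s k] and [s k.+1 = h (s k)] of late segments become close. *)
Lemma segments_small_steps (h : T -> T) p eps : compact [set: T] ->
  continuous h -> (forall k, s k.+1 = h (s k)) -> 0 < eps ->
  (forall z, cluster_points s z -> ball p (eps + eps) z -> h z = z) ->
  (forall j, (j <= a j)%N) ->
  (forall j k, (a j <= k < b j)%N -> ball p eps (s k)) ->
  forall e, 0 < e ->
    \forall j \near \oo, forall k, (a j <= k < b j)%N -> ball (s k) e (s k.+1).
Proof.
move=> cT hc sh eps0 fixh ja near_p e e0; apply: contrapT => not_small.
pose Q j k := (k < b j)%N -> ball (s k) e (s k.+1).
have [|z cz] := segments_frequently_bad Q cT.
  move=> small; apply/not_small/(filterS _ small) => j Qj k /andP[ak kb].
  by apply: (Qj k _ kb); rewrite ak ltnW.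
have bad e' N : 0 < e' -> exists k,
    [/\ (N <= k)%N, ball p eps (s k), ~ ball (s k) e (s k.+1) & ball z e' (s k)].
  move=> e'0; have [j [k [Nj /andP[ak _] nQ bk]]] := cz e' e'0 N.
  have kb : (k < b j)%N by apply: contrapT => nkb; apply: nQ => /nkb.
  exists k; split => //; first exact: leq_trans Nj (leq_trans (ja j) ak).
    by apply: (near_p j); rewrite ak kb.
  by move=> bst; apply: nQ.
have cz_s : cluster_points s z.
  by move=> e' e'0 N; have [k [Nk _ _ bk]] := bad e' N e'0; exists k.
have hz : h z = z.
  apply: (fixh z cz_s); have [k [_ bk_p _ bk]] := bad eps 0%N eps0.
  exact: ball_triangle bk_p (ball_sym bk).
have e20 : 0 < e / 2 by rewrite divr_gt0.
have [d hd] := nbhs_ex (hc z _ (nbhsx_ballx (h z) _ e20)).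
have [k [_ _ nb bk]] := bad (minr d%:num (e / 2)) 0%N ltac:(by rewrite lt_min e20 andbT).
apply: nb; rewrite sh (splitr e).
apply: ball_triangle (ball_sym (le_ball _ bk)) _; first by rewrite ge_min lexx orbT.
by rewrite -{1}hz; apply: hd; apply: le_ball bk; rewrite ge_min lexx.
Qed.

Section Connected.
Variable p : T.
Hypotheses (cT : compact [set: T]) (ab : forall j, (a j <= b j)%N).
Hypothesis start : (fun j => s (a j)) @ \oo --> p.
Hypothesis small_steps : forall e, 0 < e ->
  \forall j \near \oo, forall k, (a j <= k < b j)%N -> ball (s k) e (s k.+1).

(* A chain of small steps from near [p] cannot jump the positive gap between
   two disjoint closed sets. *)
Lemma limsup_segments_sub {A B : set T} : closed A -> closed B ->
  (forall z, A z -> B z -> False) -> limsup_segments `<=` A `|` B -> A p ->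
  limsup_segments `<=` A.
Proof.
move=> cA cB AB LAB Ap.
have [d d0 gap] := closed_disjoint_gap cT cA cB AB.
have d30 : 0 < d / 3 by rewrite divr_gt0.
have near_A : \forall j \near \oo, forall i, (a j + i <= b j)%N ->
    exists2 l, A l & ball l (d / 3) (s (a j + i)%N).
  near=> j.
  have near_L : forall k, (a j <= k <= b j)%N ->
      exists2 l, limsup_segments l & ball l (d / 3) (s k).
    by near: j; exact: segments_near_limsup.
  have step : forall k, (a j <= k < b j)%N -> ball (s k) (d / 3) (s k.+1).
    by near: j; exact: small_steps.
  elim=> [|i IH] ij.
    by exists p => //; rewrite addn0; near: j; exact: (cvg_ballP _ _).1 start _ d30.
  rewrite addnS in ij *; have [l Al bl] := IH (ltnW ij).
  have [|l' Ll' bl'] := near_L (a j + i).+1; first by rewrite ij andbT leqW // leq_addr.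
  have [Al'|Bl'] := LAB l' Ll'; first by exists l'.
  have st : ball (s (a j + i)%N) (d / 3) (s (a j + i).+1).
    by apply: step; rewrite leq_addr ij.
  exfalso; apply: (gap l l' Al Bl').
  by apply: le_ball (ball_triangle (ball_triangle bl st) (ball_sym bl')); lra.
have [J _ HJ] := near_A.
move=> z Lz; have [j [k [Jj /andP[ak kb] bk]]] := Lz _ d30 J.
have [l Al bl] := HJ j Jj (k - a j)%N ltac:(by rewrite subnKC).
rewrite subnKC // in bl.
have [//|Bz] := LAB z Lz; exfalso; apply: (gap l z Al Bz).
by apply: le_ball (ball_triangle bl (ball_sym bk)); lra.
Unshelve. all: by end_near.
Qed.

Lemma limsup_segments_connected : connected limsup_segments.
Proof.
apply: contrapT => /connectedPn [E [En LE [sep1 sep2]]].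
have LEb c : limsup_segments = E c `|` E (~~ c) by case: c; rewrite LE // setUC.
have sepE c : closure (E c) `&` E (~~ c) = set0.
  by case: c => //; rewrite setIC.
have cE c : closed (E c).
  rewrite closure_id; apply/seteqP; split => [|z cz]; first exact: subset_closure.
  have : limsup_segments z.
    rewrite ((closure_id _).1 closed_limsup_segments).
    by apply: closureS cz; rewrite (LEb c); exact: subsetUl.
  rewrite (LEb c) => -[//|Ez]; exfalso.
  by have : (closure (E c) `&` E (~~ c)) z by []; rewrite sepE.
have disjE c z : E c z -> E (~~ c) z -> False.
  move=> Ez Ez'; have : (closure (E c) `&` E (~~ c)) z.
    by split => //; exact: subset_closure.
  by rewrite sepE.
have [c Ep] : exists c, E c p.
  have : limsup_segments p by exact: limsup_segments_start.
  by rewrite LE => -[]; [exists false|exists true].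
have [w Ew] := En (~~ c).
have LEc : limsup_segments `<=` E c `|` E (~~ c) by move=> z; rewrite -(LEb c).
have Ecw := limsup_segments_sub (cE c) (cE (~~ c)) (@disjE c) LEc Ep w.
have Lw : limsup_segments w by rewrite (LEb c); right.
exact: disjE (Ecw Lw) Ew.
Qed.

End Connected.

End Segments.

(** * Omega-limit sets in completely regular continua *)

Lemma iter_periodic {U : Type} (g : U -> U) m x j i : iter m g x = x ->
  iter (j * m + i) g x = iter i g x.
Proof. by move=> mx; rewrite addnC iterD iterM (iter_fix _ mx). Qed.

Section Orbits.
Context {R : realType} {T : pseudoMetricType R}.
Variables (g : T -> T) (y : T).
Hypothesis hT : hausdorff_space T.

Lemma iter_continuous n : continuous g -> continuous (iter n g).
Proof.
move=> gc; elim: n => [|n IH] x /=; first exact: cvg_id.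
exact: (continuous_comp (IH x) (gc _)).
Qed.

Lemma periodic_orbit_cluster_finite K m : (0 < m)%N ->
  iter m g (iter K g y) = iter K g y ->
  finite_set (cluster_points (fun k => iter k g y)).
Proof.
move=> m0 per.
suff sub : cluster_points (fun k => iter k g y) `<=` (fun i => iter (i + K) g y) @` `I_m.
  exact: sub_finite_set sub (finite_image _ (finite_II m)).
apply: (cluster_points_residue_limits _ _ m K hT m0) => i _.
have -> : (fun j => iter (j * m + i + K) g y) = fun=> iter (i + K) g y.
  by apply: funext => j; rewrite iterD iter_periodic // -iterD.
exact: cvg_cst.
Qed.

Lemma cvg_residue_orbit_cluster_finite M t (p : T) : continuous g -> (0 < M)%N ->
  (fun j => iter (j * M + t) g y) @ \oo --> p ->
  finite_set (cluster_points (fun k => iter k g y)).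
Proof.
move=> gc M0 sp.
suff sub : cluster_points (fun k => iter k g y) `<=` (fun i => iter i g p) @` `I_M.
  exact: sub_finite_set sub (finite_image _ (finite_II M)).
apply: (cluster_points_residue_limits _ _ M t hT M0) => i _.
have -> : (fun j => iter (j * M + i + t) g y) =
    iter i g \o (fun j => iter (j * M + t) g y).
  by apply: funext => j /=; rewrite addnAC addnC iterD.
exact: continuous_cvg _ (iter_continuous i gc p) sp.
Qed.

End Orbits.

Section CompletelyRegular.
Context {R : realType} {T : pseudoMetricType R}.
Variables (g : T -> T) (y : T).
Hypotheses (hT : hausdorff_space T) (cT : compact [set: T]) (gc : continuous g).
Hypothesis CR : forall A : set T, subcontinuum A ->
  (exists u v, A u /\ A v /\ u <> v) -> A° !=set0.
Let Om := cluster_points (fun k => iter k g y).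
Hypothesis TP : totally_periodic g Om.

Lemma finite_of_orbit_hits K : Om (iter K g y) -> finite_set Om.
Proof.
by move=> /TP[m [m0 hm]]; exact: (periodic_orbit_cluster_finite _ _ hT _ _ m0 hm).
Qed.

Lemma finite_of_subcontinuum (C : set T) : C `<=` Om -> subcontinuum C ->
  (exists u v, C u /\ C v /\ u <> v) -> finite_set Om.
Proof.
move=> CO sC two; have [q Iq] := CR _ sC two; have [d hd] := nbhs_ex Iq.
have [k _ bk] := CO q (interior_subset Iq) d%:num (gt0 d) 0%N.
by apply: (finite_of_orbit_hits k); apply/CO/hd.
Qed.

Section Residue.
Variables (M t : nat) (p : T) (eps : R).
Hypotheses (M0 : (0 < M)%N) (eps0 : 0 < eps).
Hypothesis fixM : forall z, Om z -> ball p (eps + eps) z -> iter M g z = z.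
Let s j := iter (j * M + t) g y.
Hypothesis Clp : cluster_points s p.

Lemma residue_cluster_sub : cluster_points s `<=` Om.
Proof.
apply: (cluster_points_comp (fun k => iter k g y) (fun j => j * M + t)%N) => j.
by rewrite (leq_trans (leq_pmulr _ M0)) // leq_addr.
Qed.

Lemma finite_of_segments (a b : nat -> nat) :
  (forall j, (j <= a j)%N) -> (forall j, (a j <= b j)%N) ->
  (fun j => s (a j)) @ \oo --> p ->
  (forall j k, (a j <= k < b j)%N -> ball p eps (s k)) ->
  (exists2 q, limsup_segments s a b q & q <> p) -> finite_set Om.
Proof.
move=> ja ab sp near_p [q Lq qp].
have sS k : s k.+1 = iter M g (s k) by rewrite /s mulSn -addnA iterD.
have fixs z : cluster_points s z -> ball p (eps + eps) z -> iter M g z = z.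
  by move=> /residue_cluster_sub; exact: fixM.
have steps := segments_small_steps s a b (iter M g) p eps cT
  (iter_continuous g M gc) sS eps0 fixs ja near_p.
apply: (finite_of_subcontinuum (limsup_segments s a b)).
- by move=> z /(limsup_segments_cluster s a b ja) /residue_cluster_sub.
- split; first by exists p; exact: limsup_segments_start s a b p ab sp.
  split; first exact: subclosed_compact (closed_limsup_segments _ _ _) cT _.
  exact: limsup_segments_connected s a b p cT ab sp steps.
- exists p, q; split; first exact: limsup_segments_start s a b p ab sp.
  by split=> // pq; exact: qp.
Qed.

Lemma finite_of_eventually_near :
  (\forall j \near \oo, ball p eps (s j)) -> finite_set Om.
Proof.
move=> [N _ HN]; have [a [Na aS sa]] := cluster_points_subseq Clp N.
have ja j : (j <= a j)%N := leq_trans (leq_addl N j) (Na j).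
have ab j : (a j <= a j.+1)%N := ltnW (aS j).
have near_p j k : (a j <= k < a j.+1)%N -> ball p eps (s k).
  by case/andP => ak _; apply: HN; exact: leq_trans (leq_trans (leq_addr j N) (Na j)) ak.
have [[q Lq qp]|only_p] :=
  pselect (exists2 q, limsup_segments s a (a \o succn) q & q <> p).
  exact: (finite_of_segments _ _ ja ab sa near_p (ex_intro2 _ _ q Lq qp)).
apply: (cvg_residue_orbit_cluster_finite g y hT M t p gc M0).
apply/cvg_ballP => e e0; apply: contrapT => /frequently_not far.
have [z cz] := compact_cluster_frequent s _ cT far.
have Lz : limsup_segments s a (a \o succn) z.
  move=> e' e'0 J; have [k [aJk _ bk]] := cz e' e'0 (a J).
  by have [i [Ji seg]] := exists_segment_index _ _ _ ja aJk; exists i, k.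
have zp : z = p by apply: contrapT => zp; apply: only_p; exists z.
by have [k [_ nb bk]] := cz e e0 0%N; apply: nb; rewrite -zp.
Qed.

Lemma finite_of_frequently_far :
  ~ (\forall j \near \oo, ball p eps (s j)) -> finite_set Om.
Proof.
move=> /frequently_not far; have [a [ja _ sa]] := cluster_points_subseq Clp 0.
have exit j : exists k, (a j <= k)%N && ~~ `[< ball p eps (s k) >].
  by have [k ajk nb] := far (a j); exists k; rewrite ajk; apply/asboolPn.
pose b j := ex_minn (exit j).
have ab j : (a j <= b j)%N by rewrite /b; case: ex_minnP => k /andP[].
have far_b j : ~ ball p eps (s (b j)).
  by rewrite /b; case: ex_minnP => k /andP[_ /asboolPn].
have near_p j k : (a j <= k < b j)%N -> ball p eps (s k).
  rewrite /b; case: ex_minnP => k' _ min_k' /andP[ak kk'].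
  apply: contrapT => nb; move: kk'; rewrite ltnNge => /negP; apply.
  by apply: min_k'; rewrite ak; apply/asboolPn.
apply: (finite_of_segments _ _ ja ab sa near_p).
have [q cq] := compact_cluster_points (s \o b) cT; exists q.
  by move=> e e0 J; have [j Jj bj] := cq e e0 J; exists j, (b j); rewrite ab leqnn.
by move=> qp; have [j _ bj] := cq eps eps0 0%N; apply: (far_b j); rewrite -qp.
Qed.

End Residue.

Lemma totally_periodic_cluster_finite : finite_set Om.
Proof.
have [->|/set0P Om_ne] := eqVneq Om set0; first exact: finite_set0.
have cov : Om `<=` \bigcup_m [set x | iter m.+1 g x = x].
  by move=> z /TP [m [m0 hm]]; exists m.-1; rewrite ?prednK.
have [m [p [r [Op r0 fix_r]]]] := compact_baire cT _ _ (closed_cluster_points _)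
  (fun m => closed_fixed_points _ hT (iter_continuous g m.+1 gc)) cov Om_ne.
have [t _ Clp] := cluster_points_residue (ltn0Sn m) Op.
have fixM z : Om z -> ball p (r / 4 + r / 4) z -> iter m.+1 g z = z.
  by move=> Oz bz; apply: fix_r; split => //; apply: le_ball bz; lra.
have eps0 : 0 < r / 4 by rewrite divr_gt0.
have [near|far] :=
  pselect (\forall j \near \oo, ball p (r / 4) (iter (j * m.+1 + t) g y)).
  exact: (finite_of_eventually_near _ _ _ _ (ltn0Sn m) eps0 fixM Clp near).
exact: (finite_of_frequently_far _ _ _ _ (ltn0Sn m) eps0 fixM Clp far).
Qed.

End CompletelyRegular.

Local Close Scope ring_scope.

Corollary completely_regular_omega_limit_finite {R : realType}
  {X : pseudoMetricType R} (g : X -> X) y :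
  completely_regular_continuum X -> continuous g ->
  totally_periodic g (omega_limit g y) -> finite_set (omega_limit g y).
Proof.
move=> [[hX [cX _]] CR] gc; rewrite omega_limitE => TP.
exact: (totally_periodic_cluster_finite g y hX cX gc CR TP).
Qed.

(** * Product maps *)

Lemma finite_dprod_set {I : finType} {T : I -> Type} (B : forall i, set (T i)) :
  (forall i, finite_set (B i)) ->
  finite_set [set w : forall i, T i | forall i, B i (w i)].
Proof.
move=> finB.
have code i : exists ke : nat * (T i -> nat),
    (forall z, B i z -> (ke.2 z < ke.1)%N) /\ {in B i &, injective ke.2}.
  have /finite_set_leP [k /pcard_leP] := finB i.
  by rewrite injfunPex => -[e efun einj]; exists (k, e).
pose ke i := proj1_sig (cid (code i)).
have ke_lt i : forall z, B i z -> ((ke i).2 z < (ke i).1)%N.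
  by rewrite /ke; case: cid => ? [].
have ke_inj i : {in B i &, injective (ke i).2}.
  by rewrite /ke; case: cid => ? [].
pose K := (\max_i (ke i).1)%N.
pose Phi (w : forall i, T i) := [ffun i => (inord ((ke i).2 (w i)) : 'I_K.+1)].
have Phi_inj : {in [set w : forall i, T i | forall i, B i (w i)] &, injective Phi}.
  move=> w w' /set_mem Bw /set_mem Bw' Phiww'.
  apply: functional_extensionality_dep => i.
  have lt z : B i z -> ((ke i).2 z < K.+1)%N.
    move=> Bz; rewrite ltnS; apply: leq_trans (ltnW (ke_lt i z Bz)) _.
    exact: (leq_bigmax (F := fun j => (ke j).1) i).
  apply: (ke_inj i); [exact: mem_set|exact: mem_set|].
  have := congr1 (fun h : {ffun I -> 'I_K.+1} => nat_of_ord (h i)) Phiww'.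
  by rewrite /Phi /= !ffunE !inordK //; exact: lt.
by rewrite -(eq_finite_set (inj_card_eq Phi_inj)); exact: finite_finset.
Qed.

Section ProductMap.
Context {R : realType} {n : nat} {X : 'I_n -> pseudoMetricType R}.
Variable f : forall i, X i -> X i.

Lemma compact_prod_topology : (forall i, compact [set: X i]) ->
  compact [set: prod_topology X].
Proof.
move=> cX; have := tychonoff cX.
by rewrite (_ : [set w | forall i, [set: X i] (w i)] = setT) //; apply/seteqP.
Qed.

Lemma iter_prod_map m (v : prod_topology X) i :
  iter m (prod_map f) v i = iter m (f i) (v i).
Proof. by elim: m => [//|m IH] /=; rewrite -IH. Qed.

Lemma cluster_points_proj_iter (u : nat -> nat) x c i :
  cluster_points (fun k => iter (u k) (prod_map f) x) c ->
  cluster_points ((fun k => iter k (f i) (x i)) \o u) (c i).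
Proof.
move=> /(@cluster_points_continuous _ (prod_topology X) _ (proj i) _ _
  (@proj_continuous _ _ i c)).
by congr (cluster_points _ _); apply: funext => k; rewrite /= /proj iter_prod_map.
Qed.

Lemma omega_limit_prod_map_proj x w i : omega_limit (prod_map f) x w ->
  omega_limit (f i) (x i) (w i).
Proof. by rewrite !omega_limitE; exact: (cluster_points_proj_iter id). Qed.

Lemma proj_totally_periodic x i : compact [set: prod_topology X] ->
  hausdorff_space (X i) ->
  totally_periodic (prod_map f) (omega_limit (prod_map f) x) ->
  totally_periodic (f i) (omega_limit (f i) (x i)).
Proof.
move=> cY hXi TP z; rewrite omega_limitE => /cluster_points_subseq/(_ 0%N) [u [ju _ zu]].
have [c cc] := compact_cluster_points (fun k => iter (u k) (prod_map f) x) cY.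
have Oc : omega_limit (prod_map f) x c.
  rewrite omega_limitE.
  exact: (cluster_points_comp (fun k => iter k (prod_map f) x) u ju).
have ci : c i = z.
  by apply: (cluster_points_cvg hXi zu); exact: cluster_points_proj_iter.
have [m [m0 hm]] := TP c Oc.
by exists m; split => //; rewrite -ci -iter_prod_map hm.
Qed.

End ProductMap.

Theorem proposition1p7 (R : realType) (n : nat) (X : 'I_n -> pseudoMetricType R)
  (f : forall i, X i -> X i) :
  (forall i, completely_regular_continuum (X i)) ->
  (forall i, continuous (f i)) ->
  forall x : prod_topology X,
    totally_periodic (prod_map f) (omega_limit (prod_map f) x) ->
    finite_set (omega_limit (prod_map f) x).
Proof.
move=> CRX fc x TP.
have cY := compact_prod_topology (fun i => (CRX i).1.2.1).
have fin i : finite_set (omega_limit (f i) (x i)).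
  exact: completely_regular_omega_limit_finite (CRX i) (fc i)
    (proj_totally_periodic f x i cY (CRX i).1.1 TP).
apply: sub_finite_set (finite_dprod_set _ fin) => w Ow i.
exact: omega_limit_prod_map_proj Ow.
Qed.
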